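(* Let $n\ge3$ and $B_n=\langle a,b\mid ba=b^n\rangle$. 1. $\rho(B_n)=n-1>\rho(L)$ for every $L\in\mathcal L(B_n)$. 2. For every $\ell\ge2$, \[\mathcal U_\ell(B_n)=\ell-q_{\ell,n}(n-2)+(n-2)\cdot[0,\,q_{\ell,n}+\ell-1],\] where $q_{\ell,n}=\lfloor \ell/(n-1)\rfloor$ if $(n-1)\nmid \ell$ and $q_{\ell,n}=\frac{\ell}{n-1}-1$ if $(n-1)\mid\ell$.
   Context: $B_n$ is the monoid with generators $a,b$ and the single relation $ba=b^n$; it is reduced and atomic with atoms $a,b$. $\mathsf L(y)$ is the set of all $k$ such that $y$ is a product of $k$ atoms ($\mathsf L(1)=\{0\}$), $\mathcal L(B_n)=\{\mathsf L(y)\}$. For $L\subset\mathbb N_0$, $\rho(L)=\sup(L\cap\mathbb N)/\min(L\cap\mathbb N)$ if $L\cap\mathbb N\ne\emptyset$ and $\rho(L)=1$ otherwise; $\rho(B_n)=\sup_{L\in\mathcal L(B_n)}\rho(L)$. $\mathcal U_\ell(B_n)=\bigcup\{L\in\mathcal L(B_n)\mid \ell\in L\}$. Notation: $m+d\cdot[0,q]=\{m,m+d,\dots,m+qd\}$. *)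

From Stdlib Require Import Reals List Relations ClassicalEpsilon Arith.
Import ListNotations.
Open Scope R_scope.

(* Atoms of B_n = <a,b | ba = b^n>. Elements of B_n are represented by words
   over {a,b}; two words represent the same element iff they are related by
   the congruence generated by ba = b^n. *)
Inductive letter := LA | LB.

Definition step (n : nat) (u v : list letter) : Prop :=
  exists x y, u = x ++ [LB; LA] ++ y /\ v = x ++ repeat LB n ++ y.

Definition cong (n : nat) : relation (list letter) :=
  clos_refl_sym_trans (list letter) (step n).

(* L(y) for y the element represented by the word w: the set of all k such
   that y is a product of k atoms (a factorization = a word equal to y in B_n) *)
Definition Lset (n : nat) (w : list letter) : nat -> Prop :=
  fun k => exists w', cong n w w' /\ length w' = k.

Inductive ext := Fin (r : R) | Inf.

Definition ext_lt (x y : ext) : Prop :=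
  match x, y with
  | Fin a, Fin b => a < b
  | Fin _, Inf => True
  | Inf, _ => False
  end.

Definition LN (L : nat -> Prop) (k : nat) : Prop := L k /\ (0 < k)%nat.

Definition nat_min (L : nat -> Prop) : nat :=
  epsilon (inhabits 0%nat) (fun m => LN L m /\ forall k, LN L k -> (m <= k)%nat).

Definition nat_sup (L : nat -> Prop) : ext :=
  match excluded_middle_informative (exists M, forall k, LN L k -> (k <= M)%nat) with
  | left _ => Fin (INR (epsilon (inhabits 0%nat)
                        (fun m => LN L m /\ forall k, LN L k -> (k <= m)%nat)))
  | right _ => Inf
  end.

Definition rho (L : nat -> Prop) : ext :=
  match excluded_middle_informative (exists k, LN L k) with
  | right _ => Fin 1
  | left _ =>
      match nat_sup L with
      | Fin s => Fin (s / INR (nat_min L))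
      | Inf => Inf
      end
  end.

Definition ext_sup (E : R -> Prop) : ext :=
  match excluded_middle_informative (exists x, is_lub E x) with
  | left _ => Fin (epsilon (inhabits 0) (is_lub E))
  | right _ => Inf
  end.

Definition rho_Bn (n : nat) : ext :=
  match excluded_middle_informative (exists w, rho (Lset n w) = Inf) with
  | left _ => Inf
  | right _ => ext_sup (fun x => exists w, rho (Lset n w) = Fin x)
  end.

Definition Uset (n l : nat) : nat -> Prop :=
  fun k => exists w, Lset n w l /\ Lset n w k.

Definition AP (m d q : nat) : nat -> Prop :=
  fun k => exists i, (i <= q)%nat /\ k = (m + d * i)%nat.

Definition qln (l n : nat) : nat :=
  if Nat.eqb (Nat.modulo l (n - 1)) 0 then (Nat.div l (n - 1) - 1)%nat
  else Nat.div l (n - 1).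

From Stdlib Require Import Reals List Arith Lia Lra ClassicalEpsilon Relations.
Import ListNotations.
Open Scope R_scope.

(* Since b a = b^n, every b absorbs the a's to its right: b a^t = b^(1+(n-1)t).
   So every element is a^i b^m for a unique pair (i, m), which is an invariant
   of the relation computed by reading a word from the right.  For m >= 1 the
   factorizations of a^i b^m include a^i b a^t b^(m-1-(n-1)t), and every
   factorization has the length of one of these, so L(a^i b^m) is the
   progression i + m - (n-2)[0, T] with T = floor((m-1)/(n-1)).  Its elasticity
   (i+m)/(i+m-(n-2)T) is below n-1 because (n-1)T < m, and tends to n-1 along
   the elements b^((n-1)T+1). *)

Lemma rho_min_max (L : nat -> Prop) (M mu : nat) : LN L M -> LN L mu ->
  (forall k, LN L k -> (mu <= k <= M)%nat) -> rho L = Fin (INR M / INR mu).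
Proof.
  intros HM Hmu B. unfold rho.
  destruct (excluded_middle_informative (exists k, LN L k)) as [_|C];
    [|exfalso; eauto].
  assert (Hsup : nat_sup L = Fin (INR M)).
  { unfold nat_sup.
    destruct (excluded_middle_informative _) as [_|C];
      [|exfalso; apply C; exists M; intros k Hk; apply B, Hk].
    destruct (epsilon_spec (inhabits 0%nat)
      (fun m => LN L m /\ forall k, LN L k -> (k <= m)%nat)) as [S1 S2].
    - exists M. split; [exact HM|]. intros k Hk; apply B, Hk.
    - do 2 f_equal. specialize (S2 M HM). specialize (B _ S1). lia. }
  assert (Hmin : nat_min L = mu).
  { unfold nat_min.
    destruct (epsilon_spec (inhabits 0%nat)
      (fun m => LN L m /\ forall k, LN L k -> (m <= k)%nat)) as [S1 S2].
    - exists mu. split; [exact Hmu|]. intros k Hk; apply B, Hk.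
    - specialize (S2 mu Hmu). specialize (B _ S1). lia. }
  rewrite Hsup, Hmin. reflexivity.
Qed.

Lemma rho_no_positive (L : nat -> Prop) : (forall k, ~ LN L k) -> rho L = Fin 1.
Proof.
  intros H. unfold rho.
  destruct (excluded_middle_informative (exists k, LN L k)) as [[k Hk]|_];
    [exfalso; exact (H k Hk)|reflexivity].
Qed.

Lemma rho_Bn_lub (n : nat) (x : R) :
  (forall w, exists y, rho (Lset n w) = Fin y) ->
  is_lub (fun y => exists w, rho (Lset n w) = Fin y) x -> rho_Bn n = Fin x.
Proof.
  intros Hfin Hlub. unfold rho_Bn.
  destruct (excluded_middle_informative _) as [[w Hw]|_].
  - destruct (Hfin w) as [y Hy]. congruence.
  - unfold ext_sup. destruct (excluded_middle_informative _) as [_|C].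
    + f_equal. apply (is_lub_u _ _ _ (epsilon_spec _ _ (ex_intro _ x Hlub)) Hlub).
    + exfalso. exact (C (ex_intro _ x Hlub)).
Qed.

Lemma INR_div_lt (a b c : nat) : (0 < b)%nat -> (a < c * b)%nat -> INR a / INR b < INR c.
Proof.
  intros Hb Habc. assert (0 < INR b) by (apply lt_0_INR; exact Hb).
  apply (Rmult_lt_reg_r (INR b)); [assumption|].
  unfold Rdiv. rewrite Rmult_assoc, Rinv_l, Rmult_1_r by lra.
  rewrite <- mult_INR. apply lt_INR, Habc.
Qed.

Section Presentation.

Variable d : nat.

Local Notation n := (S (S d)).

Local Open Scope nat_scope.

(* [nf w = (i, m)] means that [w] represents a^i b^m. *)
Fixpoint nf (w : list letter) : nat * nat :=
  match w with
  | [] => (0, 0)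
  | LA :: w' => (S (fst (nf w')), snd (nf w'))
  | LB :: w' => (0, 1 + S d * fst (nf w') + snd (nf w'))
  end.

Definition nf_word (p : nat * nat) : list letter :=
  repeat LA (fst p) ++ repeat LB (snd p).

Lemma nf_app_l (x y y' : list letter) : nf y = nf y' -> nf (x ++ y) = nf (x ++ y').
Proof. intros H; induction x as [|[] x IH]; simpl; rewrite ?IH; reflexivity || exact H. Qed.

Lemma nf_repeat_LA_app (i : nat) (y : list letter) :
  nf (repeat LA i ++ y) = (i + fst (nf y), snd (nf y)).
Proof. induction i; simpl; [destruct (nf y)|rewrite IHi]; reflexivity. Qed.

Lemma nf_repeat_LB_app (k : nat) (y : list letter) :
  nf (repeat LB (S k) ++ y) = (0, S k + S d * fst (nf y) + snd (nf y)).
Proof.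
  induction k as [|k IH]; [reflexivity|].
  change (repeat LB (S (S k)) ++ y) with (LB :: (repeat LB (S k) ++ y)).
  cbn [nf]. rewrite IH. simpl. f_equal. lia.
Qed.

Lemma nf_repeat_LB (m : nat) : nf (repeat LB m) = (0, m).
Proof.
  destruct m; [reflexivity|].
  rewrite <- (app_nil_r (repeat LB (S m))), nf_repeat_LB_app. simpl. f_equal; lia.
Qed.

Lemma nf_nf_word (p : nat * nat) : nf (nf_word p) = p.
Proof.
  destruct p as [i m]. unfold nf_word; simpl.
  rewrite nf_repeat_LA_app, nf_repeat_LB. simpl. f_equal; lia.
Qed.

Lemma nf_step (u v : list letter) : step n u v -> nf u = nf v.
Proof.
  intros [x [y [-> ->]]]. apply nf_app_l.
  rewrite (nf_repeat_LB_app (S d)). simpl. f_equal. nia.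
Qed.

Lemma nf_cong (u v : list letter) : cong n u v -> nf u = nf v.
Proof. induction 1; [apply nf_step, H | | | ]; congruence. Qed.

Lemma cong_app_compat (p u v s : list letter) :
  cong n u v -> cong n (p ++ u ++ s) (p ++ v ++ s).
Proof.
  induction 1 as [u v [x [y [-> ->]]]| | |].
  - apply rst_step. exists (p ++ x), (y ++ s). rewrite !app_assoc. split; reflexivity.
  - apply rst_refl.
  - apply rst_sym; assumption.
  - eapply rst_trans; eassumption.
Qed.

Lemma cong_cons (x : letter) (u v : list letter) : cong n u v -> cong n (x :: u) (x :: v).
Proof. intros H. pose proof (cong_app_compat [x] _ _ [] H) as Hx. rewrite !app_nil_r in Hx. exact Hx. Qed.

Lemma cong_LB_repeat_LA (t : nat) (z : list letter) :
  cong n (LB :: repeat LA t ++ z) (repeat LB (1 + S d * t) ++ z).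
Proof.
  revert z; induction t as [|t IH]; intros z.
  - rewrite Nat.mul_0_r. apply rst_refl.
  - change (repeat LA (S t)) with (LA :: repeat LA t).
    rewrite repeat_cons, <- app_assoc.
    eapply rst_trans; [apply IH|].
    apply rst_step. exists (repeat LB (S d * t)), z. split.
    + replace (1 + S d * t) with (S d * t + 1) by lia.
      rewrite repeat_app, <- app_assoc. reflexivity.
    + replace (1 + S d * S t) with (S d * t + n) by nia.
      rewrite repeat_app, <- app_assoc. reflexivity.
Qed.

Lemma cong_nf_word (w : list letter) : cong n w (nf_word (nf w)).
Proof.
  induction w as [|[] w IH]; unfold nf_word in *; simpl.
  - apply rst_refl.
  - apply cong_cons, IH.
  - eapply rst_trans; [apply cong_cons, IH|].
    rewrite repeat_app. apply cong_LB_repeat_LA.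
Qed.

Lemma cong_iff_nf (u v : list letter) : cong n u v <-> nf u = nf v.
Proof.
  split; [apply nf_cong|]. intros E.
  eapply rst_trans; [apply cong_nf_word|]. rewrite E.
  apply rst_sym, cong_nf_word.
Qed.

(* [k] is the length of the factorization a^i b a^t b^(m-1-(n-1)t) of a^i b^m. *)
Definition is_length (i m k : nat) : Prop :=
  (m = 0 /\ k = i) \/
  (1 <= m /\ exists t, S d * t + 1 <= m /\ k + d * t = i + m).

Lemma length_is_length (w : list letter) : is_length (fst (nf w)) (snd (nf w)) (length w).
Proof.
  induction w as [|[] w IH]; simpl; unfold is_length in *.
  - left; split; reflexivity.
  - destruct IH as [[-> ->]|[Hm [t Ht]]]; [left|right]; split; auto.
    exists t. lia.
  - right. split; [lia|].
    destruct IH as [[-> ->]|[_ [t Ht]]].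
    + exists (fst (nf w)). lia.
    + exists (t + fst (nf w)). nia.
Qed.

Lemma is_length_realized (i m k : nat) :
  is_length i m k -> exists w, nf w = (i, m) /\ length w = k.
Proof.
  intros [[-> ->]|[Hm [t [Hmt Hk]]]].
  - exists (nf_word (i, 0)). rewrite nf_nf_word. split; [reflexivity|].
    unfold nf_word. simpl. rewrite app_nil_r. apply repeat_length.
  - exists (repeat LA i ++ LB :: repeat LA t ++ repeat LB (m - 1 - S d * t)).
    rewrite nf_repeat_LA_app. simpl. rewrite nf_repeat_LA_app, nf_repeat_LB. simpl.
    rewrite !length_app, !repeat_length. simpl. rewrite length_app, !repeat_length.
    split; [f_equal|]; nia.
Qed.

Lemma Lset_iff (w : list letter) (k : nat) :
  Lset n w k <-> is_length (fst (nf w)) (snd (nf w)) k.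
Proof.
  split.
  - intros [w' [Hc <-]]. rewrite (nf_cong _ _ Hc). apply length_is_length.
  - intros Hk. destruct (is_length_realized _ _ _ Hk) as [w' [E Hlen]].
    exists w'. split; [|exact Hlen].
    apply cong_iff_nf. rewrite E. destruct (nf w); reflexivity.
Qed.

Lemma Uset_iff (l k : nat) :
  Uset n l k <-> exists i m, is_length i m l /\ is_length i m k.
Proof.
  unfold Uset. split.
  - intros [w [Hl Hk]]. rewrite Lset_iff in Hl, Hk. eauto.
  - intros [i [m [Hl Hk]]]. destruct (is_length_realized _ _ _ Hl) as [w [E _]].
    exists w. rewrite !Lset_iff, E. simpl. auto.
Qed.

Section Unions.

Variables l q : nat.

Hypothesis Hq : S d * q + 1 <= l <= S d * (q + 1).

Lemma union_length_sets_sound (i m k : nat) : is_length i m l -> is_length i m k ->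
  exists j, j <= q + l - 1 /\ k = l - q * d + d * j.
Proof.
  intros [[-> ->]|[Hm [t1 [Ht1 Hl]]]] [[Hm0 ->]|[_ [t2 [Ht2 Hk]]]]; try lia.
  - exists q. nia.
  - assert (t1 + 1 <= l) by nia.
    assert (t2 <= q + t1) by nia.
    exists (q + t1 - t2). nia.
Qed.

Lemma union_length_sets_complete (j : nat) : j <= q + l - 1 ->
  exists i m, is_length i m l /\ is_length i m (l - q * d + d * j).
Proof.
  intros Hj. exists 0. destruct (Nat.le_gt_cases j q) as [Hjq|Hjq].
  - exists l. split; right; split; try lia.
    + exists 0. lia.
    + exists (q - j). nia.
  - exists (l + d * (j - q)). split; right; split; try lia.
    + exists (j - q). nia.
    + exists 0. nia.
Qed.

End Unions.

(* Both cases of [qln l n] compute (l - 1) / (n - 1). *)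
Lemma qln_bounds (l : nat) : 1 <= l ->
  S d * qln l n + 1 <= l <= S d * (qln l n + 1).
Proof.
  intros Hl. unfold qln. change (n - 1) with (S d).
  pose proof (Nat.div_mod l (S d) ltac:(lia)).
  pose proof (Nat.mod_upper_bound l (S d) ltac:(lia)).
  destruct (Nat.eqb_spec (l mod S d) 0); nia.
Qed.


Section LengthRange.

Variables i m T : nat.

Hypothesis HT : S d * T + 1 <= m <= S d * (T + 1).

Lemma is_length_range (k : nat) : is_length i m k -> i + m - d * T <= k <= i + m.
Proof.
  intros [[Hm0 _]|[_ [t [Ht Hk]]]]; [lia|].
  assert (t <= T) by nia. nia.
Qed.

Lemma is_length_max : is_length i m (i + m).
Proof. right. split; [lia|]. exists 0. lia. Qed.

Lemma is_length_min : is_length i m (i + m - d * T).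
Proof. right. split; [lia|]. exists T. nia. Qed.

End LengthRange.

Lemma rho_Lset (w : list letter) (T : nat) :
  S d * T + 1 <= snd (nf w) <= S d * (T + 1) ->
  rho (Lset n w) = Fin (INR (fst (nf w) + snd (nf w)) /
                        INR (fst (nf w) + snd (nf w) - d * T)).
Proof.
  intros HT. apply rho_min_max; unfold LN; rewrite ?Lset_iff.
  - split; [apply (is_length_max _ _ T HT)|]; lia.
  - split; [apply (is_length_min _ _ T HT)|]; nia.
  - intros k [Hk _]. rewrite Lset_iff in Hk. exact (is_length_range _ _ T HT k Hk).
Qed.

Hypothesis Hd : 1 <= d.

Lemma rho_Lset_lt (w : list letter) :
  exists x, rho (Lset n w) = Fin x /\ (x < INR (S d))%R.
Proof.
  destruct (nf w) as [i m] eqn:E.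
  destruct (Nat.eq_dec m 0) as [->|Hm].
  - destruct (Nat.eq_dec i 0) as [->|Hi].
    + exists 1%R. split.
      * apply rho_no_positive. intros k [Hk Hk0].
        rewrite Lset_iff, E in Hk. destruct Hk as [[_ ->]|[? _]]; simpl in *; lia.
      * apply (lt_INR 1). lia.
    + exists (INR i / INR i)%R. split.
      * apply rho_min_max; unfold LN; rewrite ?Lset_iff, ?E; simpl;
          try (split; [left|]; lia).
        intros k [Hk _]. rewrite Lset_iff, E in Hk.
        destruct Hk as [[_ ->]|[? _]]; simpl in *; lia.
      * apply INR_div_lt; nia.
  - set (T := (m - 1) / S d).
    pose proof (Nat.div_mod (m - 1) (S d) ltac:(lia)).
    pose proof (Nat.mod_upper_bound (m - 1) (S d) ltac:(lia)).
    fold T in H, H0.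
    eexists; split; [apply (rho_Lset w T); rewrite E; cbn [fst snd]; nia|].
    rewrite E. cbn [fst snd]. apply INR_div_lt; nia.
Qed.

Lemma rho_Lset_repeat_LB (T : nat) :
  rho (Lset n (repeat LB (S d * T + 1))) = Fin (INR (S d * T + 1) / INR (T + 1)).
Proof.
  rewrite (rho_Lset _ T); rewrite nf_repeat_LB; simpl; [|nia].
  do 3 f_equal. nia.
Qed.

Lemma rho_Lset_repeat_LB_approx (b : R) :
  (b < INR (S d))%R -> exists T, (b < INR (S d * T + 1) / INR (T + 1))%R.
Proof.
  intros Hb.
  destruct (INR_archimed (INR (S d) - b) (INR d)) as [T HT]; [lra|].
  exists T. assert (HT1 : (0 < INR (T + 1))%R) by (apply lt_0_INR; lia).
  apply (Rmult_lt_reg_r (INR (T + 1))); [exact HT1|].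
  unfold Rdiv. rewrite Rmult_assoc, Rinv_l, Rmult_1_r by lra.
  rewrite !plus_INR, mult_INR. change (INR 1) with 1%R. rewrite S_INR in *. lra.
Qed.

Lemma is_lub_rho_Lset :
  is_lub (fun x => exists w, rho (Lset n w) = Fin x) (INR (S d)).
Proof.
  split.
  - intros x [w Hw]. destruct (rho_Lset_lt w) as [y [Hy Hlt]].
    rewrite Hw in Hy. injection Hy as ->. lra.
  - intros b Hb. destruct (Rle_lt_dec (INR (S d)) b) as [|Hlt]; [assumption|].
    destruct (rho_Lset_repeat_LB_approx b Hlt) as [T HT].
    assert (Hle := Hb _ (ex_intro _ _ (rho_Lset_repeat_LB T))). lra.
Qed.

End Presentation.

Theorem corollary4p3 (n : nat) (Hn : (3 <= n)%nat) :
  (rho_Bn n = Fin (INR (n - 1)) /\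
   forall w : list letter, ext_lt (rho (Lset n w)) (Fin (INR (n - 1)))) /\
  (forall l : nat, (2 <= l)%nat ->
     forall k : nat,
       Uset n l k <->
       AP (l - qln l n * (n - 2)) (n - 2) (qln l n + l - 1) k).
Proof.
  destruct n as [|[|d]]; [lia|lia|].
  assert (Hd : (1 <= d)%nat) by lia.
  replace (S (S d) - 1)%nat with (S d) by lia.
  replace (S (S d) - 2)%nat with d by lia.
  split; [split|].
  - apply rho_Bn_lub; [|exact (is_lub_rho_Lset d Hd)].
    intros w. destruct (rho_Lset_lt d Hd w) as [x [Hx _]]. eauto.
  - intros w. destruct (rho_Lset_lt d Hd w) as [x [Hx Hlt]]. rewrite Hx. exact Hlt.
  - intros l Hl k. rewrite Uset_iff. unfold AP.
    pose proof (qln_bounds d l ltac:(lia)) as Hq. split.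
    + intros [i [m [Hil Hik]]]. exact (union_length_sets_sound d l _ Hq i m k Hil Hik).
    + intros [j [Hj ->]]. exact (union_length_sets_complete d l _ Hq j Hj).
Qed.
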